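(* For every $J\subseteq[n]$ and every $i\in[n]$, the element $q_{J,i}$ lies in $SI^B_n$. Moreover $q_{J,i}\in\bigoplus_{K:\,|K|=|J|,\ J\le_{\mathrm{Gale}}K}\mathbb C[\mathbf x_n]\cdot\theta_K$, and its component in $\mathbb C[\mathbf x_n]\cdot\theta_J$ equals $\pm\,p_{J,i}\cdot\theta_J$.
   Context: Let $n\ge1$, $\mathbb C[\mathbf x_n]=\mathbb C[x_1,\dots,x_n]$. The superspace is $\Omega_n=\mathbb C[\mathbf x_n]\otimes\wedge\{\theta_1,\dots,\theta_n\}$: the $\theta_i$ anticommute among themselves and commute with the $x_j$. For $J=\{j_1<\dots<j_k\}\subseteq[n]$, $\theta_J=\theta_{j_1}\cdots\theta_{j_k}$; every element of $\Omega_n$ is uniquely $\sum_J f_J\theta_J$ with $f_J\in\mathbb C[\mathbf x_n]$. The group $\mathfrak B_n$ of signed permutations (bijections $\pi$ of $\{\pm1,\dots,\pm n\}$ with $\pi(-i)=-\pi(i)$) acts on $\Omega_n$ by algebra automorphisms via $\pi(x_i)=x_{\pi(i)}$, $\pi(\theta_i)=\theta_{\pi(i)}$, with $x_{-i}=-x_i$, $\theta_{-i}=-\theta_i$. $SI^B_n$ is the ideal of $\Omega_n$ generated by the $\mathfrak B_n$-invariant elements with zero constant term. The operator $\partial_i$ acts on $\Omega_n$ as $\partial/\partial x_i$, treating the $\theta$'s as constants, and $d(f)=\sum_{i=1}^n\partial_i(f)\,\theta_i$. Gale order: for subsets of equal size $\{a_1<\dots<a_r\}\le_{\mathrm{Gale}}\{b_1<\dots<b_r\}$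 iff $a_s\le b_s$ for all $s$. For $S\subseteq[n]$ and an integer $r$, $h^2_r(S)$ is the complete homogeneous symmetric polynomial of degree $r$ in the variables $\{x_s^2:s\in S\}$ (with $h^2_0(S)=1$ and $h^2_r(S)=0$ for $r<0$). For $J\subseteq[n]$ and $i\in[n]$ put $r_i=n-|J\cup\{i,\dots,n\}|+1$, and define $q_{J,i}=h^2_{r_i}(J\cup\{i,\dots,n\})\cdot\theta_J$ if $i\notin J$, $q_{J,i}=d\big(h^2_{r_i}(J\cup\{i,\dots,n\})\big)\cdot\theta_{J\setminus\{i\}}$ if $i\in J$; and $p_{J,i}=h^2_{r_i}(J\cup\{i,\dots,n\})$ if $i\notin J$, $p_{J,i}=\partial_i h^2_{r_i}(J\cup\{i,\dots,n\})$ if $i\in J$. *)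

From mathcomp Require Import all_boot all_order all_algebra all_fingroup all_field.
From mathcomp Require Import mpoly.
Set Implicit Arguments. Unset Strict Implicit. Unset Printing Implicit Defensive.
Import GRing.Theory.
Local Open Scope ring_scope.

Section Super.
Variable n : nat.

(* C[x_1..x_n]; indices [n] = {1..n} are represented 0-based by 'I_n *)
Definition poly := {mpoly algC[n]}.

(* The superspace Omega_n: an element sum_J f_J theta_J is stored as the
   finite function J |-> f_J (its coordinates in the basis theta_J). *)
Definition super := {ffun {set 'I_n} -> poly}.

(* theta_I * theta_J = sgn(I,J) theta_(I u J) when I, J disjoint, where
   sgn(I,J) = (-1)^#{(i,j) in I x J | j < i}, and 0 otherwise. *)
Definition ssign (I J : {set 'I_n}) : poly :=
  (-1) ^+ #|[set p : 'I_n * 'I_n | (p.1 \in I) && (p.2 \in J) && (p.2 < p.1)%N]|.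

Definition smul (a b : super) : super :=
  [ffun K => \sum_(I : {set 'I_n}) \sum_(J : {set 'I_n} |
      (I :&: J == set0) && (I :|: J == K)) ssign I J * a I * b J].

Definition sconst (f : poly) : super := [ffun K => if K == set0 then f else 0].

Definition sone : super := sconst 1.

Definition thetaJ (J : {set 'I_n}) : super := [ffun K => if K == J then 1 else 0].
Definition theta (i : 'I_n) : super := thetaJ [set i].

(* Signed permutations: pi(i) = (-1)^(e i) * s(i) for s a permutation of [n]
   and e a sign vector; this is a bijective encoding of B_n. *)
Definition sgnp (e : {ffun 'I_n -> bool}) (i : 'I_n) : algC := (-1) ^+ e i.

Definition pact (s : {perm 'I_n}) (e : {ffun 'I_n -> bool}) (f : poly) : poly :=
  f \mPo [tuple (sgnp e i) *: 'X_(s i) | i < n].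

(* algebra automorphism: f theta_{j1}..theta_{jk} |-> pi(f) theta_{pi j1} .. theta_{pi jk} *)
Definition sact (s : {perm 'I_n}) (e : {ffun 'I_n -> bool}) (F : super) : super :=
  \sum_(J : {set 'I_n})
    smul (sconst (pact s e (F J)))
         (foldr smul sone [seq sgnp e j *: theta (s j) | j <- enum J]).

Definition Binvariant (F : super) : Prop :=
  forall (s : {perm 'I_n}) (e : {ffun 'I_n -> bool}), sact s e F = F.

Definition const_term (F : super) : algC := (F set0)@_0%MM.

Definition in_ideal (S : super -> Prop) (F : super) : Prop :=
  exists (m : nat) (a g b : 'I_m -> super),
    (forall k, S (g k)) /\ F = \sum_(k < m) smul (smul (a k) (g k)) (b k).

Definition SIB (F : super) : Prop :=
  in_ideal (fun g => Binvariant g /\ const_term g = 0) F.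

Definition sd (f : poly) : super := \sum_(i < n) smul (sconst (mderiv i f)) (theta i).

Definition h2 (r : nat) (S : {set 'I_n}) : poly :=
  \sum_(m : 'X_{1..n < r.+1} | (mdeg m == r) &&
            [forall j : 'I_n, (j \notin S) ==> (m j == 0%N)]) ('X_[m] ^+ 2).

(* {i,...,n} (0-based) *)
Definition tailset (i : 'I_n) : {set 'I_n} := [set j : 'I_n | (i <= j)%N].

(* r_i = n - |J u {i..n}| + 1 (always >= 1) *)
Definition rr (J : {set 'I_n}) (i : 'I_n) : nat := (n.+1 - #|J :|: tailset i|)%N.

Definition qJi (J : {set 'I_n}) (i : 'I_n) : super :=
  let h := h2 (rr J i) (J :|: tailset i) in
  if i \notin J then smul (sconst h) (thetaJ J)
  else smul (sd h) (thetaJ (J :\ i)).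

Definition pJi (J : {set 'I_n}) (i : 'I_n) : poly :=
  let h := h2 (rr J i) (J :|: tailset i) in
  if i \notin J then h else mderiv i h.

(* Gale order on subsets of equal size; enum lists elements increasingly *)
Definition gale (A B : {set 'I_n}) : bool :=
  all2 (fun a b : 'I_n => (a <= b)%N) (enum A) (enum B).

End Super.

From Pilot Require Import Defs.
From mathcomp Require Import all_boot all_order all_algebra all_fingroup all_field.
From mathcomp Require Import mpoly.
Set Implicit Arguments. Unset Strict Implicit. Unset Printing Implicit Defensive.
Import GRing.Theory.
Local Open Scope ring_scope.

(* Let Y = J u {i,...,n} and h = h^2_r(Y), so that r + |Y| = n + 1 and q_{J,i}
   is h.theta_J or dh.theta_{J\i}.  Call h absorbing when both h.Omega and
   dh.Omega lie in SI^B_n; by d(ch) = c.dh + h.dc the absorbing polynomials form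
   an ideal of C[x].  For z notin Y,
     h^2_{k+1}(Y) = h^2_{k+1}(Y u {z}) - x_z^2 h^2_k(Y u {z}),
   so descending on |[n] \ Y| reduces to h^2_k([n]) with k >= 1.  That polynomial
   is B_n-invariant with zero constant term, and so is its differential because
   the chain rule makes d commute with the action.
   For the support, dh.theta_{J\i} only involves theta_{(J\i) u {k}} with
   d_k h <> 0, hence k in Y, i.e. k = i or k > i: replacing i by k moves J up
   in the Gale order, and the theta_J coefficient is +-d_i h. *)

Lemma sum_neq0_exists (V : nmodType) (I : finType) (P : pred I) (F : I -> V) :
  \sum_(i | P i) F i != 0 -> exists2 i, P i & F i != 0.
Proof.
case: (pickP (fun i => P i && (F i != 0))) => [i /andP[]|noF]; first by exists i.
by rewrite big1 ?eqxx // => i Pi; apply/eqP; move: (noF i); rewrite Pi => /negbFE.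
Qed.

Lemma mcoeffXM (n : nat) (R : comNzRingType) (w u : 'X_{1..n}) (p : {mpoly R[n]}) :
  ('X_[w] * p)@_u = if (w <= u)%MM then p@_(u - w) else 0.
Proof.
rewrite mulrC; case: ifP => [wu|wNu]; first by rewrite -{1}(submK wu) addmC mcoeffMX.
rewrite mcoeffM big1 // => k /eqP uk; rewrite mcoeffX.
case: eqP => [kw|]; last by rewrite mulr0.
by case/negP: wNu; rewrite uk kw lem_addl.
Qed.

Lemma mderivXU (n : nat) (R : nzRingType) (i j : 'I_n) :
  mderiv i ('X_j : {mpoly R[n]}) = (j == i)%:R.
Proof.
rewrite mderivX mnm1E; case: eqP => [->|_]; last by rewrite scale0r.
by rewrite -{1}[U_(i)%MM]add0m addmK mpolyX0 scale1r.
Qed.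

Section Superspace.
Variable n : nat.
Local Notation poly := (Defs.poly n).
Local Notation super := (Defs.super n).
Implicit Types (f g h : poly) (X Y Z : super) (I K S T : {set 'I_n}).

Definition pscale (f : poly) (X : super) : super := [ffun K => f * X K].

Lemma pscaleDl f g X : pscale (f + g) X = pscale f X + pscale g X.
Proof. by apply/ffunP => K; rewrite !ffunE mulrDl. Qed.

Lemma pscaleDr f X Y : pscale f (X + Y) = pscale f X + pscale f Y.
Proof. by apply/ffunP => K; rewrite !ffunE mulrDr. Qed.

Lemma pscale0l X : pscale 0 X = 0.
Proof. by apply/ffunP => K; rewrite !ffunE mul0r. Qed.

Lemma pscale0r f : pscale f 0 = 0.
Proof. by apply/ffunP => K; rewrite !ffunE mulr0. Qed.

Lemma pscaleA f g X : pscale (f * g) X = pscale f (pscale g X).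
Proof. by apply/ffunP => K; rewrite !ffunE mulrA. Qed.

Lemma pscale_thetaJ f T K : pscale f (thetaJ T) K = if K == T then f else 0.
Proof. by rewrite !ffunE; case: eqP; rewrite ?mulr1 ?mulr0. Qed.

Lemma ssign_set0l T : ssign set0 T = 1.
Proof.
rewrite /ssign (_ : [set _ | _] = set0) ?cards0 ?expr0 //.
by apply/setP => p; rewrite !inE.
Qed.

Lemma ssign_set0r T : ssign T set0 = 1.
Proof.
rewrite /ssign (_ : [set _ | _] = set0) ?cards0 ?expr0 //.
by apply/setP => p; rewrite !inE andbF.
Qed.

Lemma smul_sconstl f X : smul (sconst f) X = pscale f X.
Proof.
apply/ffunP => K; rewrite !ffunE (bigD1 set0) //= [X in _ + X]big1 ?addr0.
  rewrite (eq_bigl (pred1 K)) => [|J]; last by rewrite /= set0I set0U eqxx.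
  by rewrite big_pred1_eq ssign_set0l ffunE eqxx mul1r.
by move=> I /negbTE I0; apply: big1 => J _; rewrite ffunE I0 mulr0 mul0r.
Qed.

Lemma smul_sonel X : smul (sone n) X = X.
Proof. by rewrite smul_sconstl; apply/ffunP => K; rewrite ffunE mul1r. Qed.

Lemma smul_soner X : smul X (sone n) = X.
Proof.
apply/ffunP => K; rewrite !ffunE (bigD1 K) //= [X in _ + X]big1 ?addr0; last first.
  move=> I IK; apply: big1 => J /andP[_ /eqP IJ]; rewrite ffunE.
  case: eqP => [J0|]; last by rewrite mulr0.
  by rewrite -IJ J0 setU0 eqxx in IK.
rewrite (bigD1 set0) ?setI0 ?setU0 ?eqxx //= big1 ?addr0.
  by rewrite ssign_set0r ffunE eqxx mul1r mulr1.
by move=> J /andP[_ /negbTE J0]; rewrite ffunE J0 mulr0.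
Qed.

Lemma smulDl X Y Z : smul (X + Y) Z = smul X Z + smul Y Z.
Proof.
apply/ffunP => K; rewrite !ffunE -big_split; apply: eq_bigr => I _.
by rewrite -big_split; apply: eq_bigr => J _; rewrite ffunE mulrDr mulrDl.
Qed.

Lemma smul_pscalel f X Y : smul (pscale f X) Y = pscale f (smul X Y).
Proof.
apply/ffunP => K; rewrite !ffunE mulr_sumr; apply: eq_bigr => I _.
rewrite mulr_sumr; apply: eq_bigr => J _.
by rewrite ffunE !mulrA [ssign I J * f]mulrC.
Qed.

Lemma smul_thetaJ X T K : smul X (thetaJ T) K =
  \sum_(I | (I :&: T == set0) && (I :|: T == K)) ssign I T * X I.
Proof.
rewrite ffunE [RHS]big_mkcond; apply: eq_bigr => I _; case: ifP => IT.
  rewrite (bigD1 T) //= ffunE eqxx mulr1 big1 ?addr0 // => J /andP[_ /negbTE JT].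
  by rewrite ffunE JT mulr0.
rewrite big1 // => J IJ; rewrite ffunE; case: eqP => [JT|]; last by rewrite mulr0.
by rewrite -JT IJ in IT.
Qed.

Lemma sdE f : sd f = \sum_(i < n) pscale (mderiv i f) (theta i).
Proof. by apply: eq_bigr => i _; rewrite smul_sconstl. Qed.

Lemma sdD f g : sd (f + g) = sd f + sd g.
Proof.
by rewrite !sdE -big_split; apply: eq_bigr => i _; rewrite mderivD pscaleDl.
Qed.

Lemma sdM f g : sd (f * g) = pscale f (sd g) + pscale g (sd f).
Proof.
rewrite !sdE !(big_morph _ (pscaleDr _) (pscale0r _)) -big_split.
by apply: eq_bigr => i _; rewrite mderivM pscaleDl -!pscaleA addrC [g * _]mulrC.
Qed.

Lemma sd_coef h I : sd h I = \sum_(k | I == [set k]) mderiv k h.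
Proof.
rewrite sdE sum_ffunE [RHS]big_mkcond; apply: eq_bigr => k _.
by rewrite pscale_thetaJ.
Qed.

Lemma sd_set1 h k : sd h [set k] = mderiv k h.
Proof.
rewrite sd_coef (eq_bigl (pred1 k)) ?big_pred1_eq // => j.
by rewrite /= eq_sym (inj_eq set1_inj).
Qed.

Lemma sd_set0 h : sd h set0 = 0.
Proof.
rewrite sd_coef big_pred0 // => k; apply/eqP => /setP/(_ k).
by rewrite !inE eqxx.
Qed.

Lemma sd_neq0 h I : sd h I != 0 -> exists2 k, I = [set k] & mderiv k h != 0.
Proof. by rewrite sd_coef => /sum_neq0_exists[k /eqP]; exists k. Qed.

Lemma SIBD X Y : SIB X -> SIB Y -> SIB (X + Y).
Proof.
move=> [m1 [a1 [g1 [b1 [g1S ->]]]]] [m2 [a2 [g2 [b2 [g2S ->]]]]].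
pose cat (A1 : 'I_m1 -> super) (A2 : 'I_m2 -> super) (k : 'I_(m1 + m2)) :=
  match split k with inl k1 => A1 k1 | inr k2 => A2 k2 end.
exists (m1 + m2)%N, (cat a1 a2), (cat g1 g2), (cat b1 b2); split.
  by move=> k; rewrite /cat; case: split.
by rewrite big_split_ord /cat; congr (_ + _); apply: eq_bigr => k _;
  rewrite ?(unsplitK (inl k)) ?(unsplitK (inr k)).
Qed.

Lemma SIB_pscale f X : SIB X -> SIB (pscale f X).
Proof.
move=> [m [a [g [b [gS ->]]]]].
exists m, (fun k => pscale f (a k)), g, b; split => //.
rewrite (big_morph _ (pscaleDr _) (pscale0r _)).
by apply: eq_bigr => k _; rewrite !smul_pscalel.
Qed.

Lemma SIB_smul_generator G X : Binvariant G -> const_term G = 0 ->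
  SIB (smul G X).
Proof.
move=> Ginv G0; exists 1%N, (fun=> sone n), (fun=> G), (fun=> X); split => //.
by rewrite big_ord1 smul_sonel.
Qed.

Definition SIB_absorbing h : Prop :=
  (forall X, SIB (pscale h X)) /\ (forall X, SIB (smul (sd h) X)).

Lemma SIB_absorbingD f g :
  SIB_absorbing f -> SIB_absorbing g -> SIB_absorbing (f + g).
Proof.
move=> [fX dfX] [gX dgX]; split => X; first by rewrite pscaleDl; apply: SIBD.
by rewrite sdD smulDl; apply: SIBD.
Qed.

Lemma SIB_absorbingMl f g : SIB_absorbing g -> SIB_absorbing (f * g).
Proof.
move=> [gX dgX]; split => X; first by rewrite pscaleA; apply: SIB_pscale.
by rewrite sdM smulDl !smul_pscalel; apply: SIBD; [apply: SIB_pscale|].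
Qed.

Lemma SIB_absorbingB f g :
  SIB_absorbing f -> SIB_absorbing g -> SIB_absorbing (f - g).
Proof.
by move=> af ag; apply: SIB_absorbingD => //; rewrite -mulN1r; apply: SIB_absorbingMl.
Qed.

Lemma SIB_absorbing_invariant h :
  Binvariant (sconst h) -> h@_0 = 0 -> Binvariant (sd h) -> SIB_absorbing h.
Proof.
move=> hinv h0 dhinv; split => X.
  rewrite -smul_sconstl; apply: SIB_smul_generator => //.
  by rewrite /const_term ffunE eqxx.
by apply: SIB_smul_generator; rewrite // /const_term sd_set0 mcoeff0.
Qed.

Definition h2_exponent r S (u : 'X_{1..n}) : bool :=
  [forall j, ~~ odd (u j) && ((j \notin S) ==> (u j == 0%N))] && (mdeg u == r.*2).

Lemma mnm_double_eq (m1 m2 : 'X_{1..n}) : (m1 *+ 2 == m2 *+ 2)%MM = (m1 == m2).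
Proof.
apply/eqP/eqP => [/mnmP m12|-> //]; apply/mnmP => j.
by apply: double_inj; move: (m12 j); rewrite !mulmnE !muln2.
Qed.

Lemma h2_exponent_double r S (m : 'X_{1..n}) : h2_exponent r S (m *+ 2) =
  (mdeg m == r) && [forall j, (j \notin S) ==> (m j == 0%N)].
Proof.
rewrite /h2_exponent mdegMn muln2 (inj_eq double_inj) andbC; congr andb.
by apply: eq_forallb => j; rewrite mulmnE muln2 odd_double double_eq0.
Qed.

Lemma h2_coef r S u : (h2 r S)@_u = (h2_exponent r S u)%:R.
Proof.
rewrite /h2 raddf_sum /=; under eq_bigr => m _ do rewrite mpolyXn mcoeffX.
case: (pickP (fun j => odd (u j))) => [j odd_uj|even_u].
  rewrite /h2_exponent (_ : [forall j, _] = false); last first.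
    by apply/negbTE/forallPn; exists j; rewrite odd_uj.
  rewrite big1 // => m _; case: eqP => // m2u.
  by move: odd_uj; rewrite -m2u mulmnE muln2 odd_double.
pose m := [multinom (u j)./2 | j < n].
have -> : u = (m *+ 2)%MM.
  apply/mnmP => j; rewrite mulmnE mnmE muln2 -{1}(odd_double_half (u j)).
  by rewrite even_u.
rewrite h2_exponent_double; under eq_bigr => m' _ do rewrite mnm_double_eq.
case: (boolP (_ && _)) => [/andP[/eqP degm mS]|Nm].
  have mr : (mdeg m < r.+1)%N by rewrite degm.
  rewrite (bigD1 (BMultinom mr)) /= ?degm ?eqxx ?mS // big1 ?addr0 //.
  move=> m' /andP[_ /eqP m'm]; case: eqP => // m'E.
  by case: m'm; apply: val_inj.
rewrite big1 // => m' /andP[m'r m'S]; case: eqP => // m'm.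
by move: Nm; rewrite -m'm m'r m'S.
Qed.

Lemma h2_setU1 k S z : z \notin S ->
  h2 k.+1 S = h2 k.+1 (z |: S) - 'X_[U_(z) *+ 2] * h2 k (z |: S).
Proof.
move=> zS; apply/mpolyP => u; rewrite mcoeffB mcoeffXM !h2_coef.
set w := (U_(z) *+ 2)%MM.
have wE j : w j = (2 * (z == j))%N by rewrite mulmnE mnm1E mulnC.
case: ifP => [wu|wNu].
  have uz2 : (2 <= u z)%N by move/mnm_lepP: wu => /(_ z); rewrite wE eqxx.
  have -> : h2_exponent k.+1 S u = false.
    apply/negbTE/negP => /andP[/forallP/(_ z)/andP[_ /implyP/(_ zS)/eqP uz0] _].
    by rewrite uz0 in uz2.
  suff -> : h2_exponent k.+1 (z |: S) u = h2_exponent k (z |: S) (u - w).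
    by rewrite subrr.
  congr andb.
    apply: eq_forallb => j; rewrite mnmBE wE in_setU1.
    case: (eqVneq z j) => [<-|_] /=; last by rewrite subn0.
    by rewrite muln1 oddB // addbF.
  by rewrite -{1}(submK wu) mdegD mdegMn mdeg1 doubleS addn2 eqSS.
rewrite subr0.
have uz2 : (u z < 2)%N.
  rewrite ltnNge; apply/negP => uz2; move/negP: wNu; apply.
  by apply/mnm_lepP => j; rewrite wE; case: (eqVneq z j) => [<-|].
case uz: (u z) uz2 => [|[|//]] _.
  congr (_%:R); congr andb; apply: eq_forallb => j; rewrite in_setU1.
  by case: (eqVneq j z) => [->|]; rewrite ?uz ?implybT.
have oddF S' : [forall j, ~~ odd (u j) && ((j \notin S') ==> (u j == 0%N))] = false.
  by apply/negbTE/forallPn; exists z; rewrite uz.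
by rewrite /h2_exponent !oddF.
Qed.

Section SignedPermutation.
Variables (s : {perm 'I_n}) (e : {ffun 'I_n -> bool}).
Local Notation sg := (sgnp e).
Local Notation pa := (pact s e).

Lemma sgnpK i : sg i * sg i = 1.
Proof. by rewrite /sgnp -expr2 sqrr_sign. Qed.

Lemma pactX i : pa 'X_i = sg i *: 'X_(s i).
Proof. by rewrite /pact comp_mpolyXU -tnth_nth tnth_mktuple. Qed.

Lemma pactD f g : pa (f + g) = pa f + pa g.
Proof. exact: raddfD. Qed.

Lemma pactM f g : pa (f * g) = pa f * pa g.
Proof. exact: rmorphM. Qed.

Lemma pactZ c f : pa (c *: f) = c *: pa f.
Proof. exact: comp_mpolyZ. Qed.

Lemma pact1 : pa 1 = 1.
Proof. exact: rmorph1. Qed.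

Lemma pact0 : pa 0 = 0.
Proof. exact: raddf0. Qed.

Lemma pact_mderivX i m : pa (mderiv i 'X_[m]) = sg i *: mderiv (s i) (pa 'X_[m]).
Proof.
move: {2}(mdeg m) (erefl (mdeg m)) => d; elim: d m => [|d IH] m degm.
  move/eqP: degm; rewrite mdeg_eq0 => /eqP ->.
  by rewrite mpolyX0 pact1 -mpolyC1 !mderivC pact0 scaler0.
have [j mj] : exists j, m j != 0%N.
  case: (pickP (fun j => m j != 0%N)) => [j|m0]; first by exists j.
  by move: degm; rewrite mdegE big1 // => j _; apply/eqP/negbFE/m0.
have jm : (U_(j) <= m)%MM by rewrite lep1mP.
have degm' : mdeg (m - U_(j)) = d.
  by apply/eqP; rewrite -eqSS -degm -{2}(submK jm) mdegD mdeg1 addn1.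
rewrite -(submK jm) mpolyXD !mderivM pactD !pactM (IH _ degm') pactX.
rewrite mderivXU mderivM mderivZ mderivXU.
rewrite scalerDr -!scalerAl -!scalerAr !scalerA.
case: (eqVneq j i) => [->|ji]; first by rewrite sgnpK eqxx pact1 !scale1r.
by rewrite (inj_eq perm_inj) (negbTE ji) /= pact0 !mulr0 scaler0.
Qed.

Lemma pact_mderiv i f : pa (mderiv i f) = sg i *: mderiv (s i) (pa f).
Proof.
elim/mpolyind: f => [|c m p _ _ IH]; first by rewrite mderiv0 pact0 mderiv0 scaler0.
rewrite mderivD !pactD IH mderivD scalerDr mderivZ !pactZ mderivZ pact_mderivX.
by rewrite !scalerA mulrC.
Qed.

Lemma pact_h2T k : pa (h2 k setT) = h2 k setT.
Proof.
pose mperm (m : 'X_{1..n}) := [multinom m ((s^-1)%g j) | j < n].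
have pactX2 m : pa ('X_[m] ^+ 2) = 'X_[mperm m] ^+ 2.
  rewrite /pact rmorphXn /= comp_mpolyX (mpolyXE _ s) -!prodrXl.
  apply: eq_bigr => j _; rewrite tnth_mktuple mnmE permK exprAC exprZn.
  by rewrite /sgnp sqrr_sign scale1r exprAC.
have degB (m : 'X_{1..n < k.+1}) : (mdeg (mperm m) < k.+1)%N.
  by rewrite mdeg_mperm bmdeg.
have permB_inj : injective (fun m => BMultinom (degB m)).
  by move=> m1 m2 /(congr1 val) /mperm_inj /val_inj.
rewrite /h2 /pact raddf_sum [RHS](reindex_inj permB_inj) /=.
apply: eq_big => [m|m _]; last exact: pactX2.
by rewrite mdeg_mperm; congr andb; apply: eq_forallb => j; rewrite in_setT.
Qed.

Definition act_thetaJ T : super :=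
  foldr (@smul n) (sone n) [seq sg j *: theta (s j) | j <- enum T].

Lemma sactE X : sact s e X = \sum_T pscale (pa (X T)) (act_thetaJ T).
Proof. by apply: eq_bigr => T _; rewrite smul_sconstl. Qed.

Lemma sactD X Y : sact s e (X + Y) = sact s e X + sact s e Y.
Proof.
by rewrite !sactE -big_split; apply: eq_bigr => T _; rewrite ffunE pactD pscaleDl.
Qed.

Lemma sact0 : sact s e 0 = 0.
Proof. by rewrite sactE big1 // => T _; rewrite ffunE pact0 pscale0l. Qed.

Lemma sact_pscale_thetaJ f T :
  sact s e (pscale f (thetaJ T)) = pscale (pa f) (act_thetaJ T).
Proof.
rewrite sactE (bigD1 T) //= pscale_thetaJ eqxx big1 ?addr0 // => K /negbTE KT.
by rewrite pscale_thetaJ KT pact0 pscale0l.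
Qed.

Lemma act_thetaJ1 i : act_thetaJ [set i] = sg i *: theta (s i).
Proof. by rewrite /act_thetaJ enum_set1 /= smul_soner. Qed.

Lemma sact_sconst f : pa f = f -> sact s e (sconst f) = sconst f.
Proof.
move=> paf; rewrite -[sconst f]smul_soner smul_sconstl sact_pscale_thetaJ paf.
by rewrite /act_thetaJ enum_set0.
Qed.

Lemma sact_sd f : pa f = f -> sact s e (sd f) = sd f.
Proof.
move=> paf; rewrite {1}sdE (big_morph _ sactD sact0).
rewrite sdE [RHS](reindex_inj (@perm_inj _ s)); apply: eq_bigr => i _.
rewrite sact_pscale_thetaJ act_thetaJ1 pact_mderiv paf.
by apply/ffunP => K; rewrite !ffunE -scalerAl -scalerAr scalerA sgnpK scale1r.
Qed.

End SignedPermutation.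

Lemma SIB_absorbing_h2T k : SIB_absorbing (h2 k.+1 setT).
Proof.
apply: SIB_absorbing_invariant => [s e||s e].
- exact/sact_sconst/pact_h2T.
- by rewrite h2_coef /h2_exponent mdeg0 andbF.
- exact/sact_sd/pact_h2T.
Qed.

Lemma SIB_absorbing_h2 k S : (#|~: S| < k)%N -> SIB_absorbing (h2 k S).
Proof.
move dS: #|~: S| => d; elim: d k S dS => [|d IH] [|k] S dS // dk.
  by rewrite -[S]setCK (cards0_eq dS) setC0; apply: SIB_absorbing_h2T.
have [z zS] : exists z, z \in ~: S by apply/set0Pn; rewrite -card_gt0 dS.
have dzS : #|~: (z |: S)| = d.
  by apply/eqP; rewrite -eqSS -dS (cardsD1 z (~: S)) zS setCU setIC setDE.
rewrite in_setC in zS; rewrite (h2_setU1 k zS).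
by apply: SIB_absorbingB; [|apply: SIB_absorbingMl]; apply: IH; rewrite // ltnW.
Qed.

Lemma smul_sd_thetaJ_neq0 h T K : smul (sd h) (thetaJ T) K != 0 ->
  exists2 k, k \notin T & K = k |: T /\ mderiv k h != 0.
Proof.
rewrite smul_thetaJ => /sum_neq0_exists[I /andP[/eqP IT /eqP IK]].
case: (eqVneq (sd h I) 0) => [->|/sd_neq0[k Ik dkh _]]; first by rewrite mulr0 eqxx.
exists k; last by rewrite -IK Ik.
apply/negP => kT; have kI : k \in I by rewrite Ik set11.
by move/setP: IT => /(_ k); rewrite !inE kI kT.
Qed.

Lemma smul_sd_thetaJ_setU1 h T i : i \notin T ->
  smul (sd h) (thetaJ T) (i |: T) = ssign [set i] T * mderiv i h.
Proof.
move=> iT; rewrite smul_thetaJ (bigD1 [set i]) /=; last first.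
  rewrite eqxx andbT; apply/eqP/setP => j; rewrite !inE.
  by case: eqP => // ->; rewrite (negbTE iT).
rewrite sd_set1 big1 ?addr0 // => I /andP[/andP[/eqP IT /eqP IU] Ni].
case/negP: Ni; apply/eqP/setP => j; rewrite inE; apply/idP/eqP => [jI|->].
  have : j \in i |: T by rewrite -IU inE jI.
  rewrite in_setU1 => /orP[/eqP //|jT].
  by move/setP: IT => /(_ j); rewrite !inE jI jT.
have : i \in I :|: T by rewrite IU setU11.
by rewrite inE (negbTE iT) orbF.
Qed.

Lemma ssign_pm1 I T : ssign I T = 1 \/ ssign I T = -1.
Proof. by rewrite /ssign -signr_odd; case: odd; [right|left]. Qed.

Lemma mderiv_h2_notin r S k : k \notin S -> mderiv k (h2 r S) = 0.
Proof.
move=> kS; apply/mpolyP => u; rewrite mcoeff_deriv h2_coef mcoeff0.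
suff -> : h2_exponent r S (u + U_(k)) = false by rewrite mul0rn.
apply/negbTE/negP => /andP[/forallP/(_ k)/andP[_ /implyP/(_ kS)]].
by rewrite mnmDE mnm1E eqxx addn1.
Qed.

Local Notation ltn_ord := (fun x y : 'I_n => (x < y)%N).
Local Notation leq_ord := (fun x y : 'I_n => (x <= y)%N).

Lemma ltn_ord_trans : transitive ltn_ord.
Proof. by move=> y x z /ltn_trans; apply. Qed.

Lemma all2_leq_ord_refl (l : seq 'I_n) : all2 leq_ord l l.
Proof. by elim: l => //= a l ->; rewrite leqnn. Qed.

(* [a] is the element already consumed on the left, at most [k] and below [l]. *)
Lemma all2_leq_filter_cons (B : pred 'I_n) (k a : 'I_n) (l : seq 'I_n) :
  ~~ B k -> sorted ltn_ord l -> k \in l -> (a <= k)%N -> all (leq_ord a) l ->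
  all2 leq_ord (a :: filter B l) (filter (predU (pred1 k) B) l).
Proof.
move=> kB; elim: l a => [//|y l IH] a /= yl; rewrite inE => kyl ak /andP[ay al].
have ylt := order_path_min ltn_ord_trans yl; have {}yl := path_sorted yl.
case: (eqVneq k y) kyl => [kyE _|ky /= kl] /=.
  subst y; rewrite ak (negbTE kB) /=.
  rewrite (@eq_in_filter _ (predU (pred1 k) B) B) ?all2_leq_ord_refl // => x xl.
  move/allP: ylt => /(_ x xl) /= kx.
  by have /negbTE -> : x != k by apply: contraTneq kx => ->; rewrite ltnn.
have yk : (y < k)%N by move/allP: ylt => /(_ k kl).
have {}ylt : all (leq_ord y) l by apply: sub_all ylt => x /ltnW.
case: (B y) => /=; last exact: IH.
by rewrite ay; apply: IH => //; apply: ltnW.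
Qed.

Lemma all2_leq_filter_swap (B : pred 'I_n) (i k : 'I_n) (l : seq 'I_n) :
  ~~ B i -> ~~ B k -> (i < k)%N -> sorted ltn_ord l -> i \in l -> k \in l ->
  all2 leq_ord (filter (predU (pred1 i) B) l) (filter (predU (pred1 k) B) l).
Proof.
move=> iB kB ik; elim: l => [//|y l IH] /= yl; rewrite !inE => iyl kyl.
have ylt := order_path_min ltn_ord_trans yl; have {}yl := path_sorted yl.
case: (eqVneq i y) iyl => [iyE _|_ /= il].
  subst y; have ki : k != i by apply: contraTneq ik => ->; rewrite ltnn.
  rewrite eq_sym (negbTE ki) (negbTE iB) /=.
  rewrite (@eq_in_filter _ (predU (pred1 i) B) B) => [|x xl]; last first.
    move/allP: ylt => /(_ x xl) /= ix.
    by have /negbTE -> : x != i by apply: contraTneq ix => ->; rewrite ltnn.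
  apply: all2_leq_filter_cons => //; first by rewrite (negbTE ki) in kyl.
    exact: ltnW.
  by apply: sub_all ylt => x /ltnW.
have yi : (y < i)%N by move/allP: ylt => /(_ i il).
have yk : y != k by apply: contraTneq (ltn_trans yi ik) => ->; rewrite ltnNge leqnn.
rewrite eq_sym (negbTE yk) /= in kyl *.
by case: (B y) => /=; rewrite ?leqnn IH.
Qed.

Lemma gale_refl T : gale T T.
Proof. exact: all2_leq_ord_refl. Qed.

Lemma gale_setU1 T i k :
  i \notin T -> k \notin T -> (i <= k)%N -> gale (i |: T) (k |: T).
Proof.
move=> iT kT; rewrite leq_eqVlt => /orP[/eqP/val_inj ->|ik]; first exact: gale_refl.
have enumU1 j : enum (j |: T) = filter (predU (pred1 j) (mem T)) (enum 'I_n).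
  by rewrite /enum_mem filter_predT; apply: eq_filter => x; rewrite /= in_setU1.
rewrite /gale !enumU1; apply: all2_leq_filter_swap; rewrite ?mem_enum //.
by have := iota_ltn_sorted 0 n; rewrite -val_enum_ord sorted_map.
Qed.

Lemma SIB_qJi (J : {set 'I_n}) (i : 'I_n) : SIB (qJi J i).
Proof.
have [hX dhX] : SIB_absorbing (h2 (rr J i) (J :|: tailset i)).
  by apply: SIB_absorbing_h2; rewrite /rr ltn_subRL cardsC card_ord.
by rewrite /qJi /=; case: ifP => _; [rewrite smul_sconstl; apply: hX|apply: dhX].
Qed.

Lemma qJi_support (J : {set 'I_n}) (i : 'I_n) K :
  qJi J i K != 0 -> #|K| = #|J| /\ gale J K.
Proof.
rewrite /qJi /=; case: ifPn => [iJ|/negPn iJ].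
  rewrite smul_sconstl pscale_thetaJ.
  by case: (eqVneq K J) => [-> _|_]; [split; last exact: gale_refl|rewrite eqxx].
case/smul_sd_thetaJ_neq0 => k kT [-> dk].
have iT : i \notin J :\ i by rewrite !inE eqxx.
have kS : k \in J :|: tailset i.
  by apply: contraNT dk => /mderiv_h2_notin ->.
rewrite -{2 3}(setD1K iJ); split; first by rewrite !cardsU1 kT iT.
apply: gale_setU1 => //; move: kS; rewrite !inE => /orP[kJ|//].
by move: kT; rewrite !inE kJ andbT negbK => /eqP ->.
Qed.

Lemma qJi_diag (J : {set 'I_n}) (i : 'I_n) :
  qJi J i J = pJi J i \/ qJi J i J = - pJi J i.
Proof.
rewrite /qJi /pJi /=; case: ifPn => [iJ|/negPn iJ].
  by left; rewrite smul_sconstl pscale_thetaJ eqxx.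
rewrite -[X in smul _ _ X](setD1K iJ) smul_sd_thetaJ_setU1 ?inE ?eqxx //.
by case: (ssign_pm1 [set i] (J :\ i)) => ->; rewrite ?mul1r ?mulN1r; [left|right].
Qed.

End Superspace.

Theorem mainTheorem2 (n : nat) (J : {set 'I_n}) (i : 'I_n) :
  SIB (qJi J i) /\
  (forall K : {set 'I_n}, qJi J i K != 0 -> #|K| = #|J| /\ gale J K) /\
  (qJi J i J = pJi J i \/ qJi J i J = - pJi J i).
Proof.
split; first exact: SIB_qJi.
by split; [exact: qJi_support | exact: qJi_diag].
Qed.
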